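(* Fix a positive integer $l$. Let $\sigma$ be a random permutation uniformly distributed on the symmetric group $S_N$, and let $\tau$ be a random permutation uniformly distributed on the alternating group $A_N$. Then, as $N\to\infty$, $$\mathrm{Ex}\big[C_\tau^{\underline{l}}\big] = \mathrm{Ex}\big[C_\sigma^{\underline{l}}\big] + O\left(\frac{(\log N)^{l-1}}{N}\right).$$
   Context: For a permutation $\pi$ of $\{1,\ldots,N\}$, $C_\pi$ denotes the number of cycles of $\pi$; $\mathrm{Ex}$ denotes expectation. For a real number $x$, $x^{\underline{l}}=x(x-1)\cdots(x-l+1)$ denotes the $l$-th falling power. *)

From HB Require Import structures.
From mathcomp Require Import all_boot all_order all_algebra all_fingroup all_solvable.
From mathcomp Require Import all_classical all_reals all_analysis.
Set Implicit Arguments. Unset Strict Implicit. Unset Printing Implicit Defensive.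
Import Order.TTheory GRing.Theory Num.Theory.
Local Open Scope ring_scope.

(* number of cycles C_pi of a permutation of {0,...,N-1} (fixed points count) *)
Definition ncycles (N : nat) (s : {perm 'I_N}) : nat := #|porbits s|.

Definition ExSym (R : realType) (N l : nat) : R :=
  (\sum_(s : {perm 'I_N}) ((ncycles s) ^_ l)%:R) / (#|[set: {perm 'I_N}]|)%:R.

Definition ExAlt (R : realType) (N l : nat) : R :=
  (\sum_(s in ('Alt_('I_N))%g) ((ncycles s) ^_ l)%:R) / (#|('Alt_('I_N))%g|)%:R.

From HB Require Import structures.
From mathcomp Require Import all_boot all_order all_algebra all_fingroup all_solvable.
From mathcomp Require Import all_classical all_reals all_analysis.
From mathcomp Require Import zify ring lra.
Set Implicit Arguments. Unset Strict Implicit. Unset Printing Implicit Defensive.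
Import Order.TTheory GRing.Theory Num.Theory.

(* Since A_N has index 2 in S_N, Ex[f(C_tau)] - Ex[f(C_sigma)] = D_N(f) / N! with
   D_N(f) = sum_sigma sgn(sigma) f(C_sigma).  Every permutation of N+1 points is
   uniquely (j n) * u' with u' fixing n; the transposition merges the fixed point n
   into the cycle of j unless j = n, so D_(N+1)(f) = D_N(f o succ) - N D_N(f).
   With the Pascal rule for falling powers this gives |D_N(x^(l))| = O((N-1)!) by
   induction on l. *)

Section LiftPerm.
Local Open Scope group_scope.
Variables (N : nat) (i : 'I_N.+1).
Local Notation lift_fix u := (lift_perm i i u).

Lemma lift_permX (u : 'S_N) k : lift_fix u ^+ k = lift_fix (u ^+ k).
Proof.
elim: k => [|k IHk]; first by rewrite !expg0 lift_perm1.
by rewrite !expgS IHk lift_permM.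
Qed.

Lemma porbit_lift_perm_lift (u : 'S_N) x :
  porbit (lift_fix u) (lift i x) = [set lift i y | y in porbit u x].
Proof.
apply/setP => y; apply/porbitP/imsetP => [[k ->]|[z /porbitP [k ->] ->]].
  by exists ((u ^+ k) x); rewrite ?mem_porbit // lift_permX lift_perm_lift.
by exists k; rewrite lift_permX lift_perm_lift.
Qed.

Lemma porbit_lift_perm_id (u : 'S_N) : porbit (lift_fix u) i = [set i].
Proof.
apply/setP => y; rewrite inE; apply/porbitP/eqP => [[k ->]|->].
  by rewrite lift_permX lift_perm_id.
by exists 0%N; rewrite expg0 perm1.
Qed.

Lemma porbits_lift_perm (u : 'S_N) :
  porbits (lift_fix u) =
  [set i] |: [set [set lift i y | y in A] | A : {set 'I_N} in porbits u].
Proof.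
apply/setP => X; rewrite !inE; apply/imsetP/idP => [[y _ ->]|].
  case: (unliftP i y) => [x|] ->; last by rewrite porbit_lift_perm_id eqxx.
  by rewrite porbit_lift_perm_lift imset_f ?orbT ?imset_f.
case/orP => [/eqP ->|/imsetP [A /imsetP [x _ ->] ->]].
  by exists i; rewrite ?porbit_lift_perm_id.
by exists (lift i x); rewrite ?porbit_lift_perm_lift.
Qed.

Lemma ncycles_lift_perm (u : 'S_N) : ncycles (lift_fix u) = (ncycles u).+1.
Proof.
rewrite /ncycles porbits_lift_perm cardsU1 card_imset; last first.
  exact: imset_inj (@lift_inj _ i).
suff -> : [set i] \notin
  [set [set lift i y | y in A] | A : {set 'I_N} in porbits u] by [].
apply/imsetP => -[A /imsetP [x _ ->] /setP /(_ (lift i x))].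
by rewrite inE imset_f ?porbit_id // eq_sym (negbTE (neq_lift i x)).
Qed.

Definition extend_perm (p : 'I_N.+1 * 'S_N) : 'S_N.+1 :=
  tperm i p.1 * lift_fix p.2.

Lemma extend_perm_inj : injective extend_perm.
Proof.
move=> [j u] [j' u'] /= E.
have jE (k : 'I_N.+1) (v : 'S_N) : extend_perm (k, v) k = i.
  by rewrite permM tpermR lift_perm_id.
have ej : j = j' by apply: (perm_inj (s := extend_perm (j, u))); rewrite jE E jE.
move: E; rewrite /extend_perm -ej /= => /mulgI E.
congr (_, _); apply/permP => k; apply: (@lift_inj _ i).
by rewrite -(lift_perm_lift i i u) -(lift_perm_lift i i u') E.
Qed.

Lemma big_extend_perm (T : Type) (idx : T) (op : Monoid.com_law idx)
    (F : 'S_N.+1 -> T) :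
  \big[op/idx]_(s : 'S_N.+1) F s =
  \big[op/idx]_(j : 'I_N.+1) \big[op/idx]_(u : 'S_N) F (extend_perm (j, u)).
Proof.
rewrite pair_big /= (reindex extend_perm) //; apply: onW_bij.
apply: (inj_card_bij extend_perm_inj).
by rewrite card_prod card_ord !card_Sn factS.
Qed.

Lemma odd_extend_perm j u : extend_perm (j, u) = (i != j) (+) odd_perm u :> bool.
Proof. by rewrite odd_mul_tperm /= odd_lift_perm addbb. Qed.

Lemma ncycles_extend_perm j u :
  ncycles (extend_perm (j, u)) = if j == i then (ncycles u).+1 else ncycles u.
Proof.
have := porbits_mul_tperm (lift_fix u) i j.
rewrite /= -/(extend_perm (j, u)) -!/(ncycles _) ncycles_lift_perm.
rewrite porbit_sym porbit_lift_perm_id inE eq_sym; case: eqP => _ /=; lia.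
Qed.

End LiftPerm.

Local Open Scope ring_scope.

Definition signed_cycle_sum (R : ringType) N (f : nat -> R) : R :=
  \sum_(s : 'S_N) (-1) ^+ odd_perm s * f (ncycles s).

Lemma signed_cycle_sumS (R : ringType) N (f : nat -> R) :
  signed_cycle_sum N.+1 f =
  signed_cycle_sum N (fun k => f k.+1) - N%:R * signed_cycle_sum N f.
Proof.
rewrite /signed_cycle_sum (big_extend_perm ord_max) big_ord_recr /= addrC.
congr (_ + _).
  by apply: eq_bigr => u _; rewrite odd_extend_perm ncycles_extend_perm eqxx.
rewrite (eq_bigr (fun=> - signed_cycle_sum N f)) => [|j _].
  by rewrite sumr_const card_ord mulNrn mulr_natl.
rewrite -sumrN; apply: eq_bigr => u _.
have jn : (widen_ord (leqnSn N) j == ord_max) = false.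
  by apply/negbTE; rewrite -val_eqE /= neq_ltn ltn_ord.
by rewrite odd_extend_perm ncycles_extend_perm jn eq_sym jn addTb signrN mulNr.
Qed.

Lemma ffactS_pascal k l : (k.+1 ^_ l = k ^_ l + l * k ^_ l.-1)%N.
Proof.
case: l => [|l] //=; rewrite ffactSS ffactnSr.
have [lt_kl|le_lk] := ltnP k l; first by rewrite ffact_small // !muln0 mul0n.
by rewrite [(l.+1 * _)%N]mulnC -mulnDr mulnC; congr (_ * _); lia.
Qed.

Lemma signed_cycle_sumD (R : ringType) N (f g : nat -> R) :
  signed_cycle_sum N (fun k => f k + g k) =
  signed_cycle_sum N f + signed_cycle_sum N g.
Proof. by rewrite -big_split; apply: eq_bigr => s _; rewrite mulrDr. Qed.

Lemma signed_cycle_sumZ (R : comRingType) N (c : R) (f : nat -> R) :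
  signed_cycle_sum N (fun k => c * f k) = c * signed_cycle_sum N f.
Proof. by rewrite mulr_sumr; apply: eq_bigr => s _; rewrite mulrCA. Qed.

Lemma signed_cycle_sum_ffact (R : comRingType) N l :
  signed_cycle_sum N.+2 (fun k => (k ^_ l)%:R : R) =
  l%:R * signed_cycle_sum N.+1 (fun k => (k ^_ l.-1)%:R)
  - N%:R * signed_cycle_sum N.+1 (fun k => (k ^_ l)%:R).
Proof.
have pascal : (fun k => (k.+1 ^_ l)%:R : R) =
              (fun k => (k ^_ l)%:R + l%:R * (k ^_ l.-1)%:R).
  by apply: funext => k; rewrite ffactS_pascal natrD natrM.
rewrite signed_cycle_sumS pascal signed_cycle_sumD signed_cycle_sumZ -natr1.
ring.
Qed.

Lemma bounded_by_fact (R : realDomainType) (x : nat -> R) (C : R) :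
  (forall N, `|x N.+2| <= N%:R * `|x N.+1| + C * N`!%:R) ->
  exists K, forall N, `|x N.+1| <= K * N`!%:R.
Proof.
move=> rec; set K := Num.max `|x 1%N| C; exists K.
elim=> [|N IHN]; first by rewrite fact0 mulr1 le_max lexx.
apply: le_trans (rec N) _.
have le_NX : N%:R * `|x N.+1| <= N%:R * (K * N`!%:R) by rewrite ler_wpM2l.
have le_CK : C * N`!%:R <= K * N`!%:R by rewrite ler_wpM2r // le_max lexx orbT.
rewrite factS natrM -natr1 (_ : K * _ = N%:R * (K * N`!%:R) + K * N`!%:R).
  exact: lerD.
ring.
Qed.

Lemma signed_cycle_sum_ffact_bound (R : realDomainType) l :
  exists K : R, forall N,
    `|signed_cycle_sum N.+1 (fun k => (k ^_ l)%:R)| <= K * N`!%:R.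
Proof.
elim: l => [|l [K HK]].
  apply: (bounded_by_fact (x := fun N => signed_cycle_sum N _) (C := 0)) => N.
  by rewrite signed_cycle_sum_ffact !mul0r sub0r normrN normrM normr_nat addr0.
apply: (bounded_by_fact (x := fun N => signed_cycle_sum N _) (C := l.+1%:R * K)).
move=> N.
rewrite signed_cycle_sum_ffact /=.
apply: le_trans (ler_normB _ _) _.
by rewrite addrC !normrM !normr_nat -mulrA lerD2l ler_wpM2l.
Qed.

Lemma sum_Alt_double (R : ringType) (T : finType) (F : {perm T} -> R) :
  (\sum_(s in ('Alt_T)%g) F s) *+ 2 =
  \sum_s F s + \sum_s (-1) ^+ odd_perm s * F s.
Proof.
rewrite -big_split big_mkcond -sumrMnl; apply: eq_bigr => s _ /=.
rewrite Alt_even; case: odd_perm => /=.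
  by rewrite mul0rn expr1 mulN1r subrr.
by rewrite expr0 mul1r mulr2n.
Qed.

Lemma ExAlt_sub_ExSym (R : realType) N l : (1 < N)%N ->
  ExAlt R N l - ExSym R N l =
  signed_cycle_sum N (fun k => (k ^_ l)%:R) / N`!%:R.
Proof.
move=> N_gt1; have card_Alt2 := card_Alt (T := 'I_N).
rewrite card_ord in card_Alt2.
have := sum_Alt_double (fun s : 'S_N => ((ncycles s) ^_ l)%:R : R).
rewrite /ExAlt /ExSym cardsT card_Sn -(card_Alt2 N_gt1) natrM.
have : #|('Alt_('I_N))%g|%:R != 0 :> R.
  by rewrite pnatr_eq0 -lt0n; apply/card_gt0P; exists 1%g.
rewrite -/(signed_cycle_sum N (fun k => (k ^_ l)%:R)).
move: (\sum_(s in _) _) (\sum_s _) (signed_cycle_sum _ _) (#|_|%:R).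
move=> SA S D a a_neq0 SA2.
have -> : D = SA *+ 2 - S by rewrite SA2 addrC addKr.
by rewrite mulr2n; field.
Qed.

Lemma expR1_le4 (R : realType) : expR (1 : R) <= 4.
Proof.
have sqrt_e_le2 : expR (1 / 2 : R) <= 2.
  have := expR_ge1Dx (- (1 / 2) : R); rewrite expRN.
  by rewrite (_ : 1 + _ = 2^-1); [rewrite lef_pV2 ?posrE ?expR_gt0 | field].
have -> : expR (1 : R) = expR (1 / 2) ^+ 2 by rewrite -expRM_natl; congr expR; field.
rewrite (_ : 4 = 2 ^+ 2 :> R); last by rewrite expr2; lra.
by rewrite lerXn2r ?nnegrE ?expR_ge0.
Qed.

Lemma ln_ge1 (R : realType) (x : R) : 4 <= x -> 1 <= ln x.
Proof.
move=> x_ge4; have x_gt0 : 0 < x by lra.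
rewrite -{1}(expRK 1) ler_ln ?posrE ?expR_gt0 //.
exact: le_trans (expR1_le4 R) x_ge4.
Qed.

Theorem theorem3p2 (R : realType) (l : nat) (hl : (0 < l)%N) :
  exists (K : R) (N0 : nat), forall N : nat, (N0 <= N)%N ->
    `| ExAlt R N l - ExSym R N l | <= K * (ln (N%:R : R)) ^+ (l.-1) / N%:R.
Proof.
have [K HK] := signed_cycle_sum_ffact_bound R l.
have K_ge0 : 0 <= K.
  by have := le_trans (normr_ge0 _) (HK 0%N); rewrite fact0 mulr1.
exists K, 4%N => -[//|N] N_ge4.
have ln_pow_ge1 : 1 <= ln (N.+1%:R : R) ^+ l.-1.
  by apply/exprn_ege1/ln_ge1; rewrite (ler_nat R 4).
have le_K : `|signed_cycle_sum N.+1 (fun k => (k ^_ l)%:R)| / N`!%:R <= K.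
  by rewrite ler_pdivrMr ?ltr0n ?fact_gt0.
rewrite ExAlt_sub_ExSym ?(leq_trans _ N_ge4) // normrM normfV normr_nat.
rewrite factS natrM invfM [_^-1 * _]mulrC mulrA ler_wpM2r ?invr_ge0 //.
exact: le_trans le_K (ler_peMr K_ge0 ln_pow_ge1).
Qed.
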